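(* Let $\mathcal{G}=(\mathcal{N},\mathcal{E})$ be a connected graph with $N$ nodes and $E$ edges, let $A\in\mathbb{R}^{E\times N}$ be its edge-node incidence matrix, and let $x\in\mathbb{R}^E$ be an arbitrary vector of line reactances (entries are not required to be positive). Let $p\in\mathbb{R}^N$ satisfy $\mathbf{1}^\top p=0$, and fix a reference node $r\in\mathcal{N}$ and a reference angle $\theta_r\in\mathbb{R}$. Consider the DC power flow equations $$A^\top f = p,\qquad \operatorname{diag}(x)\, f = A\theta,$$ in the unknowns $f\in\mathbb{R}^E$ and $\theta\in\mathbb{R}^N$, where the $r$-th entry of $\theta$ is required to equal $\theta_r$. Then these equations have a unique solution $(f,\theta)$ if and only if one of the following holds: (1) the graph is radial (has no cycles, so $E=N-1$); or (2) the graph is meshed (contains a cycle) and the $C\times C$ matrix $\mathbf{N}^\top\operatorname{diag}(x)\mathbf{N}$ is invertible, where $\mathbf{N}$ is the cycle matrix defined in the context.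
   Context: Incidence matrix: after assigning an arbitrary direction $e=(m,n)$ to each edge, $A_{e,k}=+1$ if $k=m$, $A_{e,k}=-1$ if $k=n$, and $A_{e,k}=0$ otherwise. For a connected graph $A\mathbf{1}=\mathbf{0}$ and $\operatorname{rank}(A)=N-1$. $\operatorname{diag}(x)$ is the diagonal matrix with diagonal $x$. Cycle matrix: a cycle is a closed sequence of adjacent edges; for a cycle $\mathcal{C}$ with a chosen traversal direction, its indicator vector $n^{\mathcal{C}}\in\{0,\pm1\}^E$ has $n^{\mathcal{C}}_e=0$ if $e$ is not in the cycle, $+1$ if $e$ is directed along the traversal direction, and $-1$ otherwise. A meshed graph has $C=E-N+1$ independent cycles; $\mathbf{N}\in\mathbb{R}^{E\times C}$ is obtained by stacking as columns the indicator vectors of $C$ independent cycles, so that $\operatorname{null}(A^\top)=\operatorname{range}(\mathbf{N})$. *)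

From HB Require Import structures.
From mathcomp Require Import all_boot all_order all_algebra.
Set Implicit Arguments. Unset Strict Implicit. Unset Printing Implicit Defensive.
Import Order.TTheory GRing.Theory Num.Theory.
Local Open Scope ring_scope.

(* A (multi)graph with nodes 'I_N and edges 'I_E; edge e is given the
   (arbitrary) direction e = (src e, dst e). *)

Definition incidence (R : ringType) (N E : nat) (src dst : 'I_E -> 'I_N)
  : 'M[R]_(E, N) :=
  \matrix_(e < E, k < N) ((k == src e)%:R - (k == dst e)%:R).

Definition adj (N E : nat) (src dst : 'I_E -> 'I_N) : rel 'I_N :=
  fun u v => [exists e, ((src e == u) && (dst e == v)) || ((src e == v) && (dst e == u))].

Definition connected_graph (N E : nat) (src dst : 'I_E -> 'I_N) : Prop :=
  forall u v : 'I_N, connect (adj src dst) u v.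

Definition no_self_loops (N E : nat) (src dst : 'I_E -> 'I_N) : Prop :=
  forall e, src e != dst e.

(* A cycle with a chosen traversal direction: a nonempty sequence of
   traversed edges (e, b), b = true meaning e is traversed along its direction
   (from src e to dst e); edges are pairwise distinct, and consecutive edges
   are adjacent (end node of one = start node of the next), cyclically. *)
Definition tstart (N E : nat) (src dst : 'I_E -> 'I_N) (eb : 'I_E * bool) :=
  if eb.2 then src eb.1 else dst eb.1.
Definition tend (N E : nat) (src dst : 'I_E -> 'I_N) (eb : 'I_E * bool) :=
  if eb.2 then dst eb.1 else src eb.1.

Definition is_cycle (N E : nat) (src dst : 'I_E -> 'I_N) (s : seq ('I_E * bool))
  : Prop :=
  [/\ s != [::], uniq (map fst s) &
      path.cycle (fun a b => tend src dst a == tstart src dst b) s].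

Definition cycle_indicator (R : ringType) (E : nat) (s : seq ('I_E * bool))
  : 'cV[R]_E :=
  \col_(e < E) (if (e, true) \in s then 1 else if (e, false) \in s then -1 else 0).

Definition has_cycle (N E : nat) (src dst : 'I_E -> 'I_N) : Prop :=
  exists s, is_cycle src dst s.

Definition is_cycle_matrix (R : fieldType) (N E : nat) (src dst : 'I_E -> 'I_N)
  (Nm : 'M[R]_(E, (E.+1 - N)%N)) : Prop :=
  \rank Nm = (E.+1 - N)%N /\
  forall j, exists s, is_cycle src dst s /\ col j Nm = cycle_indicator R s.

Definition dc_pf (R : ringType) (N E : nat) (src dst : 'I_E -> 'I_N)
  (x : 'cV[R]_E) (p : 'cV[R]_N) (r : 'I_N) (thr : R)
  (f : 'cV[R]_E) (th : 'cV[R]_N) : Prop :=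
  [/\ (incidence R src dst)^T *m f = p,
      diag_mx x^T *m f = incidence R src dst *m th &
      th r 0 = thr].

From HB Require Import structures.
From mathcomp Require Import all_boot all_order all_algebra.
Import Order.TTheory GRing.Theory Num.Theory.
From mathcomp Require Import zify.
From Stdlib Require Import Classical.
Set Implicit Arguments. Unset Strict Implicit.
Local Open Scope ring_scope.

(* For a connected graph the sequence
     0 -> R^C --Nm--> R^E --A^T--> R^N --1^T--> R -> 0
   is exact, and ker A = span 1.  Hence the flows with A^T f = p are
   f0 + Nm c, and the second equation asks X f (X = diag x) to be a potential
   difference, i.e. to lie in ker Nm^T = range A; this pins c down through
   the linear system (Nm^T X Nm) c = - Nm^T X f0, while the reference angle
   fixes the remaining constant in the potential.  So the solution exists and
   is unique exactly when Nm^T X Nm is invertible; when the graph has no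
   cycle, C = 0 and this matrix is the empty one. *)

Lemma kernel_sub_colspace (F : fieldType) p n m (B : 'M[F]_(p, n)) (M : 'M_(n, m)) :
  B *m M = 0 -> (n - \rank B <= \rank M)%N ->
  forall v : 'cV_n, B *m v = 0 -> exists w : 'cV_m, v = M *m w.
Proof.
move=> BM0 rkM v Bv0.
have sMker : (M^T <= kermx B^T)%MS.
  by apply/sub_kermxP; rewrite -trmx_mul BM0 trmx0.
have skerM : (kermx B^T <= M^T)%MS.
  case: (mxrank_leqif_sup sMker) => _ <-.
  by rewrite eqn_leq mxrankS // mxrank_ker !mxrank_tr.
have /submxP[w vw] : (v^T <= M^T)%MS.
  by apply: submx_trans skerM; apply/sub_kermxP; rewrite -trmx_mul Bv0 trmx0.
by exists w^T; apply: trmx_inj; rewrite trmx_mul trmxK.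
Qed.

Section PowerFlowSystem.

Variables (F : fieldType) (n m c : nat) (r : 'I_n).
Variables (A : 'M[F]_(m, n)) (Nm : 'M[F]_(m, c)) (X : 'M[F]_m).

Hypothesis A_const : A *m (const_mx 1 : 'cV_n) = 0.
Hypothesis kerA_const : forall th : 'cV_n, A *m th = 0 -> forall u v, th u 0 = th v 0.
Hypothesis trA_Nm : A^T *m Nm = 0.
Hypothesis kerAT_sub : forall g : 'cV_m, A^T *m g = 0 -> exists k, g = Nm *m k.
Hypothesis kerNT_sub : forall y : 'cV_m, Nm^T *m y = 0 -> exists th, y = A *m th.
Hypothesis Nm_free : row_free Nm^T.

Definition pf_solution p thr (f : 'cV_m) (th : 'cV_n) :=
  [/\ A^T *m f = p, X *m f = A *m th & th r 0 = thr].

Local Notation NXN := (Nm^T *m X *m Nm).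

Lemma potential_pinned (th : 'cV_n) a : exists th', A *m th' = A *m th /\ th' r 0 = a.
Proof.
exists (th + (a - th r 0) *: const_mx 1); split.
  by rewrite mulmxDr -scalemxAr A_const scaler0 addr0.
by rewrite !mxE mulr1 addrC subrK.
Qed.

Lemma Nm_mul_eq0 (k : 'cV_c) : Nm *m k = 0 -> k = 0.
Proof.
move=> Nk0; apply: trmx_inj; apply: (row_free_inj Nm_free).
by rewrite trmx0 mul0mx -trmx_mul Nk0 trmx0.
Qed.

Lemma pf_solution_exists p thr :
  NXN \in unitmx -> (exists f0, A^T *m f0 = p) -> exists f th, pf_solution p thr f th.
Proof.
move=> NXN_unit [f0 Af0].
pose f := f0 - Nm *m (invmx NXN *m (Nm^T *m X *m f0)).
have /kerNT_sub[th0 Xf] : Nm^T *m (X *m f) = 0.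
  by rewrite /f mulmxBr mulmxBr !mulmxA (mulmxV NXN_unit) mul1mx subrr.
have [th [Ath th_r]] := potential_pinned th0 thr.
exists f, th; split=> //.
- by rewrite /f mulmxBr mulmxA trA_Nm mul0mx subr0.
- by rewrite Ath.
Qed.

Lemma pf_solution_unique p thr f1 th1 f2 th2 :
  NXN \in unitmx -> pf_solution p thr f1 th1 -> pf_solution p thr f2 th2 ->
  f1 = f2 /\ th1 = th2.
Proof.
move=> NXN_unit [Af1 Xf1 th1r] [Af2 Xf2 th2r].
have [k f12] : exists k, f1 - f2 = Nm *m k.
  by apply: kerAT_sub; rewrite mulmxBr Af1 Af2 subrr.
have Xf12 : X *m (f1 - f2) = A *m (th1 - th2) by rewrite !mulmxBr Xf1 Xf2.
have NXNk : NXN *m k = 0.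
  have NT_A : Nm^T *m A = 0 by rewrite -[A]trmxK -trmx_mul trA_Nm trmx0.
  by rewrite -!mulmxA -f12 Xf12 mulmxA NT_A mul0mx.
have k0 : k = 0 by rewrite -(mulKmx NXN_unit k) NXNk mulmx0.
have f1f2 : f1 = f2 by apply/eqP; rewrite -subr_eq0 f12 k0 mulmx0.
split=> //; have Ath12 : A *m (th1 - th2) = 0 by rewrite -Xf12 f1f2 subrr mulmx0.
apply/eqP; rewrite -subr_eq0; apply/eqP/matrixP => u j; rewrite ord1.
by rewrite (kerA_const Ath12 u r) !mxE th1r th2r subrr.
Qed.

Lemma pf_solution_not_unique p thr f th :
  NXN \notin unitmx -> pf_solution p thr f th ->
  exists f' th', pf_solution p thr f' th' /\ f' != f.
Proof.
move=> NXN_sing [Af Xf _].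
have /det0P[v v0 vNXN] : \det NXN^T == 0.
  by rewrite det_tr; move: NXN_sing; rewrite unitmxE unitfE negbK.
have NXNv : NXN *m v^T = 0 by apply: trmx_inj; rewrite trmx_mul trmxK vNXN trmx0.
have /kerNT_sub[t Xt] : Nm^T *m (X *m (Nm *m v^T)) = 0 by rewrite !mulmxA NXNv.
have [th' [Ath' th'r]] := potential_pinned (th + t) thr.
exists (f + Nm *m v^T), th'; split; first split=> //.
- by rewrite mulmxDr mulmxA trA_Nm mul0mx addr0.
- by rewrite Ath' !mulmxDr Xf Xt.
- rewrite -subr_eq0 addrC addKr; apply: contra v0 => /eqP/Nm_mul_eq0 v0.
  by rewrite -[v]trmxK v0 trmx0.
Qed.

Lemma pf_unique_solvability p thr :
  (exists f0, A^T *m f0 = p) ->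
  ((exists f th, pf_solution p thr f th) /\
   (forall f1 th1 f2 th2, pf_solution p thr f1 th1 -> pf_solution p thr f2 th2 ->
      f1 = f2 /\ th1 = th2))
  <-> NXN \in unitmx.
Proof.
move=> p_range; split=> [[[f [th sol]] uniq_sol] | NXN_unit].
  apply/negPn/negP => /pf_solution_not_unique/(_ sol)[f' [th' [sol' f'f]]].
  by have [/eqP] := uniq_sol _ _ _ _ sol' sol; rewrite (negbTE f'f).
split; first exact: pf_solution_exists.
by move=> ? ? ? ?; apply: pf_solution_unique.
Qed.

End PowerFlowSystem.

Section Incidence.

Variables (R : ringType) (N E : nat) (src dst : 'I_E -> 'I_N).
Local Notation A := (incidence R src dst).

Lemma incidence_mulmx (th : 'cV[R]_N) e :
  (A *m th) e 0 = th (src e) 0 - th (dst e) 0.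
Proof.
rewrite mxE; under eq_bigr => k _ do rewrite mxE mulrBl !mulr_natl !mulrb.
by rewrite sumrB -!big_mkcond !big_pred1_eq.
Qed.

Lemma incidence_mul_const : A *m (const_mx 1 : 'cV_N) = 0.
Proof. by apply/matrixP => e j; rewrite ord1 incidence_mulmx !mxE subrr. Qed.

Lemma incidence_ker_const :
  connected_graph src dst ->
  forall th : 'cV[R]_N, A *m th = 0 -> forall u v, th u 0 = th v 0.
Proof.
move=> conn th Ath0.
have th_adj u v : adj src dst u v -> th u 0 = th v 0.
  have th_edge e : th (src e) 0 = th (dst e) 0.
    by apply/eqP; rewrite -subr_eq0 -incidence_mulmx Ath0 mxE.
  by case/existsP=> e /orP[] /andP[/eqP <- /eqP <-].
move=> u v; have /connectP[q pq ->] := conn u v.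
elim: q u pq => [//|w q IHq] u /= /andP[uw pq].
by rewrite (th_adj _ _ uw) IHq.
Qed.

Definition dir_sign (b : bool) : R := if b then 1 else -1.

Lemma cycle_indicator_sum (s : seq ('I_E * bool)) e :
  uniq (map fst s) ->
  cycle_indicator R s e 0 = \sum_(a <- s) (a.1 == e)%:R * dir_sign a.2.
Proof.
rewrite mxE; elim: s => [|[e' b] s IHs]; first by rewrite big_nil.
rewrite /= big_cons => /andP[e's uniq_s]; rewrite -IHs // !inE !xpair_eqE /=.
have [<-|_] := eqVneq e' e; last by rewrite /= mul0r add0r.
have notin_s b' : ((e', b') \in s) = false.
  by apply/negbTE; apply: contra e's => H; apply/mapP; exists (e', b').
by rewrite !notin_s mul1r; case: b; rewrite /= ?addr0.
Qed.

Lemma map_tend_belast x (s : seq ('I_E * bool)) :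
  path (fun a b => tend src dst a == tstart src dst b) x s ->
  map (tend src dst) (belast x s) = map (tstart src dst) s.
Proof. by elim: s x => [//|y s IHs] x /= /andP[/eqP -> /IHs ->]. Qed.

Lemma incidence_tr_cycle_indicator s :
  is_cycle src dst s -> A^T *m cycle_indicator R s = 0.
Proof.
case=> s_ne uniq_s cyc_s; apply/matrixP => k j; rewrite ord1 [RHS]mxE mxE.
under eq_bigr => e _ do rewrite mxE (cycle_indicator_sum _ uniq_s) mulr_sumr.
rewrite exchange_big /=.
under eq_bigr => a _.
  rewrite (bigD1 a.1) //= eqxx mul1r big1 ?addr0; last first.
    by move=> e /negbTE; rewrite eq_sym => ->; rewrite mul0r mulr0.
  rewrite mxE.
  have -> : ((k == src a.1)%:R - (k == dst a.1)%:R) * dir_sign a.2 =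
            (k == tstart src dst a)%:R - (k == tend src dst a)%:R.
    by rewrite /tstart /tend /dir_sign; case: a.2; rewrite ?mulr1 ?mulrN1 ?opprB.
  over.
rewrite sumrB; apply/eqP; rewrite subr_eq0; apply/eqP.
rewrite -(big_map (tstart src dst) xpredT (fun y => (k == y)%:R)).
rewrite -(big_map (tend src dst) xpredT (fun y => (k == y)%:R)).
apply: perm_big; case: s s_ne cyc_s {uniq_s} => [//|a s] _ /=.
move/map_tend_belast; rewrite belast_rcons /= => ->.
by rewrite map_rcons perm_sym perm_rcons.
Qed.

End Incidence.

Section CycleSpace.

Variables (R : fieldType) (N E : nat) (src dst : 'I_E -> 'I_N).
Variable Nm : 'M[R]_(E, (E.+1 - N)%N).
Hypothesis conn : connected_graph src dst.
Hypothesis Nm_cycles : is_cycle_matrix src dst Nm.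
Local Notation A := (incidence R src dst).

Lemma incidence_rank : (N - 1 <= \rank A)%N.
Proof.
have ker_const : (kermx A^T <= (const_mx 1 : 'rV[R]_N))%MS.
  apply/row_subP => i; set v := row i (kermx A^T).
  have Av : A *m v^T = 0.
    by rewrite -[A]trmxK -trmx_mul /v -row_mul mulmx_ker row0 trmx0.
  have -> : v = v 0 i *: const_mx 1.
    apply/rowP => u; rewrite !mxE mulr1.
    by have := incidence_ker_const conn Av u i; rewrite !mxE.
  exact: scalemx_sub.
have := mxrankS ker_const; rewrite mxrank_ker mxrank_tr.
have := rank_leq_row (const_mx 1 : 'rV[R]_N); lia.
Qed.

Lemma incidence_tr_range (r : 'I_N) (q : 'cV[R]_N) :
  \sum_k q k 0 = 0 -> exists f, A^T *m f = q.
Proof.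
move=> q_sum0.
suff [f ->] : exists f, q = A^T *m f by exists f.
apply: (@kernel_sub_colspace _ _ _ _ (const_mx 1 : 'rV[R]_N)).
- by apply: trmx_inj; rewrite trmx_mul trmxK trmx_const incidence_mul_const trmx0.
- have rk1 : \rank (const_mx 1 : 'rV[R]_N) = 1%N.
    apply/eqP; rewrite eqn_leq rank_leq_row lt0n mxrank_eq0.
    by apply/eqP => /rowP/(_ r); rewrite !mxE; apply/eqP; exact: oner_neq0.
  by rewrite rk1 mxrank_tr incidence_rank.
- apply/rowP => i; rewrite ord1 mxE [RHS]mxE -[RHS]q_sum0.
  by apply: eq_bigr => k _; rewrite mxE mul1r.
Qed.

Lemma incidence_tr_cycle_matrix : A^T *m Nm = 0.
Proof.
apply/matrixP => k j; have [s [cyc_s Nm_j]] := Nm_cycles.2 j.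
move: (incidence_tr_cycle_indicator R cyc_s) => /matrixP/(_ k 0).
rewrite -Nm_j !mxE => Nm_jk; rewrite -[RHS]Nm_jk.
by apply: eq_bigr => e _; rewrite !mxE.
Qed.

Lemma nodes_leq_edgesS : (N <= E.+1)%N.
Proof. by have := incidence_rank; have := rank_leq_row A; lia. Qed.

Lemma cycle_matrix_row_free : row_free Nm^T.
Proof. by rewrite /row_free mxrank_tr Nm_cycles.1. Qed.

Lemma ker_incidence_tr (g : 'cV[R]_E) :
  A^T *m g = 0 -> exists k, g = Nm *m k.
Proof.
apply: kernel_sub_colspace; first exact: incidence_tr_cycle_matrix.
rewrite mxrank_tr Nm_cycles.1; have := incidence_rank; lia.
Qed.

Lemma ker_cycle_matrix_tr (y : 'cV[R]_E) :
  Nm^T *m y = 0 -> exists th, y = A *m th.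
Proof.
apply: kernel_sub_colspace.
  by rewrite -[A]trmxK -trmx_mul incidence_tr_cycle_matrix trmx0.
rewrite mxrank_tr Nm_cycles.1; have := incidence_rank; have := nodes_leq_edgesS; lia.
Qed.

Lemma acyclic_cycle_rank : ~ has_cycle src dst -> (E.+1 - N)%N = 0%N.
Proof.
move=> no_cycle; case: (posnP (E.+1 - N)) => // C_gt0; case: no_cycle.
by have [s [cyc_s _]] := Nm_cycles.2 (Ordinal C_gt0); exists s.
Qed.

End CycleSpace.

Theorem proposition1 (R : realFieldType) (N E : nat) (src dst : 'I_E -> 'I_N)
  (Nm : 'M[R]_(E, (E.+1 - N)%N))
  (x : 'cV[R]_E) (p : 'cV[R]_N) (r : 'I_N) (thr : R) :
  no_self_loops src dst ->
  connected_graph src dst ->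
  is_cycle_matrix src dst Nm ->
  \sum_(k < N) p k 0 = 0 ->
  ((exists f th, dc_pf src dst x p r thr f th) /\
   (forall f1 th1 f2 th2, dc_pf src dst x p r thr f1 th1 ->
      dc_pf src dst x p r thr f2 th2 -> f1 = f2 /\ th1 = th2))
  <->
  (~ has_cycle src dst \/
   (has_cycle src dst /\ Nm^T *m diag_mx x^T *m Nm \in unitmx)).
Proof.
move=> _ conn Nm_cycles p_sum0.
rewrite (pf_unique_solvability r (diag_mx x^T)
  (incidence_mul_const R src dst) (incidence_ker_const conn)
  (incidence_tr_cycle_matrix Nm_cycles) (ker_incidence_tr conn Nm_cycles)
  (ker_cycle_matrix_tr conn Nm_cycles) (cycle_matrix_row_free Nm_cycles) thr
  (incidence_tr_range conn r p_sum0)).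
split=> [NXN_unit | [no_cycle | [_ //]]].
  by have [cyc | no_cycle] := classic (has_cycle src dst); [right | left].
have C0 := acyclic_cycle_rank Nm_cycles no_cycle.
by rewrite -row_free_unit /row_free eqn_leq rank_leq_row {1}C0.
Qed.
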